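(* Let $0\le k\le n$ and let quadratic-form data be given: $h\in\mathbb F_2^n$, linearly independent $v_1,\dots,v_k\in\mathbb F_2^n$, $d\in\mathbb F_2^k$, an upper-triangular $J\in\mathbb F_2^{k\times k}$, and a nonzero $\gamma\in\mathbb C$. Run the following procedure. Set $a_t=d_t+2J_{tt}\in\mathbb Z_4$ and let $B\in\mathbb F_2^{k\times k}$ be the symmetric zero-diagonal matrix with $B_{ij}=J_{ij}$ for $i<j$, $B_{ij}=J_{ji}$ for $i>j$. Create tables $A,V,C$ of length $2^k$ initialized to $0$ and set $A[2^{t-1}]=a_t$, $V[2^{t-1}]=v_t$, $C[2^{t-1}]=$ the $t$-th column of $B$ ($t=1,\dots,k$). Initialize a complex array $\psi$ of length $2^n$ to zero, set $y\gets 0\in\mathbb F_2^k$, $x\gets h$, $p\gets 0\in\mathbb F_2^k$, $q\gets 0\in\mathbb Z_4$, and $\psi_x\gets\gamma$. For $m=1,\dots,2^k-1$: let $f\gets m\,\&\,(-m)$; if $(y\,\&\,f)=0$ set $q\gets q+A[f]+2\cdot\mathbf 1[(p\,\&\,f)\neq 0]\pmod 4$, otherwise set $q\gets q-A[f]+2\cdot\mathbf 1[(p\,\&\,f)\neq 0]\pmod 4$; then set $y\gets y\oplus f$, $x\gets x\oplus V[f]$, $p\gets p\oplus C[f]$, and $\psi_x\gets\gamma\,\mathrm i^{q}$. Return $\psi$. Then the returned array is exactly the amplitude vector $(\psi_x)_{x\in\mathbb F_2^n}$ with \[ \psi_{h\oplus\sum_{t=1}^k y_t v_t}=\gamma\,\mathrm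 i^{d^\top y}(-1)^{y^\top J y}\quad\text{for all } y\in\mathbb F_2^k, \] and $\psi_x=0$ for all $x\notin h+\operatorname{span}\{v_1,\dots,v_k\}$.
   Context: $\mathbb F_2=\{0,1\}$, $\oplus$ is XOR. A $k$-bit vector $y\in\mathbb F_2^k$ is encoded as the integer $\sum_{t=1}^k y_t 2^{t-1}$ (coordinate $t$ is the bit of value $2^{t-1}$); similarly for $n$-bit vectors, which index the array $\psi$. $\&$ is bitwise AND on these integers, $-m$ is two's-complement negation so that $m\,\&\,(-m)$ is the lowest set bit of $m$, and $\mathbf 1[\cdot]$ is the indicator. In the exponents $d^\top y$ and $y^\top Jy$, bits are treated as integers with ordinary integer products; $\mathrm i^{q}$ depends only on $q$ mod $4$. This data (a quadratic-form description) describes an $n$-qubit stabilizer state with support the affine space $h+\operatorname{span}\{v_1,\dots,v_k\}$. *)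

From HB Require Import structures.
From mathcomp Require Import all_boot all_order all_algebra.
From Stdlib Require ZArith.
Set Implicit Arguments. Unset Strict Implicit. Unset Printing Implicit Defensive.
Import Order.TTheory GRing.Theory Num.Theory.
Local Open Scope ring_scope.

Definition bitv (b : 'F_2) : nat := val b.

(* encoding of a vector in F_2^n as the integer sum_t y_t 2^(t-1)
   (coordinate t, 1-indexed, is the bit of value 2^(t-1); here t is 0-indexed) *)
Definition enc (n : nat) (y : 'rV['F_2]_n) : nat :=
  (\sum_(t < n) bitv (y ord0 t) * 2 ^ t)%N.

Definition tbl (T : Type) (k : nat) (dflt : T) (g : 'I_k -> T) (j : nat) : T :=
  match [pick t : 'I_k | j == (2 ^ t)%N] with Some t => g t | None => dflt end.

Definition lowbit (m : nat) : nat :=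
  BinInt.Z.to_nat (BinInt.Z.land (BinInt.Z.of_nat m) (BinInt.Z.opp (BinInt.Z.of_nat m))).

Definition symB (k : nat) (J : 'M['F_2]_k) : 'M['F_2]_k :=
  \matrix_(i, j) (if (i < j)%N then J i j else if (j < i)%N then J j i else 0).

Section Alg.
Variables (C : numClosedFieldType) (n k : nat) (h : 'rV['F_2]_n)
  (Vm : 'M['F_2]_(k, n)) (d : 'rV['F_2]_k) (J : 'M['F_2]_k) (gamma : C).

Definition tabA : nat -> 'Z_4 :=
  tbl 0 (fun t : 'I_k => ((bitv (d ord0 t) + 2 * bitv (J t t))%N)%:R).
Definition tabV : nat -> nat := tbl 0%N (fun t : 'I_k => enc (row t Vm)).
Definition tabC : nat -> nat :=
  tbl 0%N (fun t : 'I_k => enc (\row_i (symB J) i t)).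

Record state := St { st_y : nat; st_x : nat; st_p : nat; st_q : 'Z_4;
                     st_psi : nat -> C }.

Definition upd (psi : nat -> C) (x : nat) (v : C) : nat -> C :=
  fun z => if z == x then v else psi z.

Definition step (s : state) (m : nat) : state :=
  let f := lowbit m in
  let ind : 'Z_4 := (2 * (Nat.land (st_p s) f != 0%N))%N%:R in
  let q' := if Nat.land (st_y s) f == 0%N then st_q s + tabA f + ind
            else st_q s - tabA f + ind in
  let y' := Nat.lxor (st_y s) f in
  let x' := Nat.lxor (st_x s) (tabV f) in
  let p' := Nat.lxor (st_p s) (tabC f) in
  St y' x' p' q' (upd (st_psi s) x' (gamma * 'i ^+ (val q'))).

Definition init : state :=
  St 0 (enc h) 0 0 (upd (fun _ => 0) (enc h) gamma).

(* the returned array psi, indexed by the integer encodings of F_2^n *)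
Definition procedure : nat -> C :=
  st_psi (foldl step init (iota 1 (2 ^ k - 1))).
End Alg.

From HB Require Import structures.
From mathcomp Require Import all_boot all_order all_algebra zify ring.
From Stdlib Require ZArith PeanoNat.
Import Order.TTheory GRing.Theory Num.Theory.
Set Implicit Arguments. Unset Strict Implicit. Unset Printing Implicit Defensive.

(* The loop visits F_2^k in Gray-code order: the m-th vector differs from the
   previous one exactly in coordinate t, where lowbit m = 2^t, and the first
   2^k of them exhaust F_2^k (the code of 2^K + j is the code of 2^K plus the
   code of j, and the code of 2^K has top coordinate K).  Flipping coordinate t
   of y changes the exponent d.y + 2 y^T J y in Z_4 by +-a_t + 2 (By)_t, because
   b := 1 - 2 y_t satisfies b^2 = 1 and 2b = 2 mod 4, and J is upper
   triangular; so the registers y, x, p, q always hold y, h + yV, By and that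
   exponent.  As V has full row rank, distinct y are written at distinct sites,
   and no other site is ever written. *)

(* Kept apart because importing ZArith rebinds the nat notation [^] to Nat.pow. *)
Module Zlowbit.
Import ZArith Lia.
Local Open Scope Z_scope.

Lemma land_opp_odd c : Z.land (2 * c + 1) (- (2 * c + 1)) = 1.
Proof.
apply: Z.bits_inj' => [[|i|i]] // _.
  by rewrite Z.land_spec !Z.bit0_odd Z.odd_opp Z.add_comm Z.odd_add_mul_2.
change (Z.testbit 1 (Z.pos i)) with false.
rewrite Z.land_spec Z.bits_opp; last lia.
have -> : Z.pos i = Z.succ (Z.pred (Z.pos i)) by lia.
have -> : Z.pred (2 * c + 1) = 2 * c by lia.
by rewrite Z.testbit_odd_succ ?Z.testbit_even_succ ?andbN //; lia.
Qed.

Lemma land_opp_mul_pow2 a v : 0 <= v ->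
  Z.land (a * 2 ^ v) (- (a * 2 ^ v)) = Z.land a (- a) * 2 ^ v.
Proof.
by move=> v_ge0; rewrite -Z.mul_opp_l -!Z.shiftl_mul_pow2 // Z.shiftl_land.
Qed.

Lemma lowbit_odd_mul_pow2 (c v : nat) : lowbit ((2 * c + 1) * 2 ^ v) = (2 ^ v)%nat.
Proof.
rewrite /lowbit Nat2Z.inj_mul Nat2Z.inj_add Nat2Z.inj_mul Nat2Z.inj_pow.
rewrite land_opp_mul_pow2 ?land_opp_odd; last lia.
by rewrite Z.mul_1_l -(Nat2Z.inj_pow 2) Nat2Z.id.
Qed.

End Zlowbit.

Lemma expn2E v : (2 ^ v)%N = PeanoNat.Nat.pow 2 v.
Proof. by elim: v => // v IH; rewrite expnS IH. Qed.

Lemma lowbit_odd_mul_pow2 c v : odd c -> lowbit (c * 2 ^ v) = (2 ^ v)%N.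
Proof.
move=> odd_c; have -> : c = (2 * c./2 + 1)%N.
  by rewrite -[c in LHS]odd_double_half odd_c; lia.
rewrite expn2E; exact: Zlowbit.lowbit_odd_mul_pow2.
Qed.

Lemma exists_odd_mul_pow2 m : (0 < m)%N -> exists2 c, odd c & exists v, m = (c * 2 ^ v)%N.
Proof.
move=> m_gt0; have [c] := pfactor_coprime (isT : prime 2) m_gt0.
by rewrite coprime2n => odd_c ->; exists c => //; exists (logn 2 m).
Qed.

Lemma ltn_odd_mul_pow2 c v K : odd c -> (c * 2 ^ v < 2 ^ K)%N -> (v < K)%N.
Proof.
move=> odd_c lt_m; rewrite -(ltn_exp2l _ _ (ltnSn 1)); apply: leq_ltn_trans lt_m.
by rewrite leq_pmull // odd_gt0.
Qed.

Lemma lowbit_lt m K : (0 < m)%N -> (m < 2 ^ K)%N ->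
  exists2 v, (v < K)%N & lowbit m = (2 ^ v)%N.
Proof.
move=> /exists_odd_mul_pow2[c odd_c [v ->]] lt_m; exists v.
  exact: ltn_odd_mul_pow2 lt_m.
exact: lowbit_odd_mul_pow2.
Qed.

Lemma lowbit_pow2 K : lowbit (2 ^ K) = (2 ^ K)%N.
Proof. by rewrite -{1}(mul1n (2 ^ K)) lowbit_odd_mul_pow2. Qed.

Lemma lowbit_pow2D K j : (0 < j)%N -> (j < 2 ^ K)%N -> lowbit (2 ^ K + j) = lowbit j.
Proof.
move=> /exists_odd_mul_pow2[c odd_c [v ->]] lt_j.
have lt_vK := ltn_odd_mul_pow2 odd_c lt_j.
rewrite -(subnK (ltnW lt_vK)) expnD -mulnDl !lowbit_odd_mul_pow2 //.
by rewrite oddD oddX subn_eq0 leqNgt lt_vK odd_c.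
Qed.

Local Open Scope ring_scope.

Lemma F2_01 (b : 'F_2) : b = 0 \/ b = 1.
Proof. by case: b => [[|[|]]] // ?; [left | right]; apply: val_inj. Qed.

Lemma F2_bitE (b : 'F_2) : b = (b != 0)%:R.
Proof. by case: (F2_01 b) => ->. Qed.

Lemma bitvE (b : 'F_2) : bitv b = (b != 0).
Proof. by case: b => [[|[|]]]. Qed.

Lemma F2_addr_neq0 (a b : 'F_2) : (a + b != 0) = (a != 0) (+) (b != 0).
Proof. by case: a => [[|[|]]] //; case: b => [[|[|]]]. Qed.

Lemma testbit_sum_pow2 (f : nat -> bool) n i :
  PeanoNat.Nat.testbit (\sum_(t < n) f t * 2 ^ t)%N i = (i < n)%N && f i.
Proof.
elim: n f i => [|n IH] f i; first by rewrite big_ord0 PeanoNat.Nat.bits_0.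
have -> : (\sum_(t < n.+1) f t * 2 ^ t)%N = PeanoNat.Nat.add
    (PeanoNat.Nat.mul 2 (\sum_(t < n) f t.+1 * 2 ^ t)) (PeanoNat.Nat.b2n (f 0)).
  rewrite plusE multE big_ord_recl expn0 muln1 addnC big_distrr /=.
  by congr (_ + _)%N; apply: eq_bigr => t _; rewrite /bump add1n expnS; lia.
case: i => [|i]; first by rewrite PeanoNat.Nat.testbit_0_r.
by rewrite PeanoNat.Nat.testbit_succ_r (IH (fun t => f t.+1)).
Qed.

Lemma land_pow2_neq0 x t :
  (PeanoNat.Nat.land x (2 ^ t) != 0)%N = PeanoNat.Nat.testbit x t.
Proof.
rewrite expn2E; apply/idP/idP => [|xt].
  apply: contraLR => /negbTE xt_f; rewrite negbK; apply/eqP/PeanoNat.Nat.bits_inj_iff => i.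
  rewrite PeanoNat.Nat.land_spec PeanoNat.Nat.bits_0 PeanoNat.Nat.pow2_bits_eqb.
  by case: PeanoNat.Nat.eqb_spec => [<-|]; rewrite ?xt_f ?andbF.
apply/eqP => /(congr1 (PeanoNat.Nat.testbit ^~ t)).
by rewrite PeanoNat.Nat.land_spec xt PeanoNat.Nat.pow2_bits_true PeanoNat.Nat.bits_0.
Qed.

Section Encoding.
Variable n : nat.
Implicit Types (a b y : 'rV['F_2]_n).

Definition rbit y (i : nat) : bool :=
  if insub i is Some t then y 0 t != 0 else false.

Lemma rbit_ord y (t : 'I_n) : rbit y t = (y 0 t != 0).
Proof. by rewrite /rbit valK. Qed.

Lemma testbit_enc y i : PeanoNat.Nat.testbit (enc y) i = rbit y i.
Proof.
have -> : enc y = (\sum_(t < n) rbit y t * 2 ^ t)%N.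
  by apply: eq_bigr => t _; rewrite bitvE rbit_ord.
by rewrite testbit_sum_pow2 /rbit; case: insubP => [t -> _|/negbTE ->].
Qed.

Lemma enc_inj : injective (enc (n:=n)).
Proof.
move=> a b eq_ab; apply/rowP => t; rewrite [LHS]F2_bitE [RHS]F2_bitE.
by rewrite -!rbit_ord -!testbit_enc eq_ab.
Qed.

Lemma encD a b : enc (a + b) = PeanoNat.Nat.lxor (enc a) (enc b).
Proof.
apply: PeanoNat.Nat.bits_inj => i.
rewrite PeanoNat.Nat.lxor_spec !testbit_enc /rbit; case: insubP => // t _ _.
by rewrite mxE F2_addr_neq0; case: (a 0 t != 0).
Qed.

Lemma enc0 : enc (0 : 'rV['F_2]_n) = 0%N.
Proof. by rewrite /enc big1 // => t _; rewrite mxE. Qed.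

Lemma enc_delta (t : 'I_n) : enc (delta_mx 0 t : 'rV['F_2]_n) = (2 ^ t)%N.
Proof.
apply: PeanoNat.Nat.bits_inj => i.
rewrite testbit_enc expn2E PeanoNat.Nat.pow2_bits_eqb /rbit.
case: insubP => [s _ <-|not_lt]; last first.
  by apply/esym/PeanoNat.Nat.eqb_neq => eq_ti; rewrite -eq_ti ltn_ord in not_lt.
rewrite mxE /=; case: PeanoNat.Nat.eqb_spec => [/val_inj ->|ne]; first by rewrite eqxx.
suff /negbTE -> : s != t by [].
by apply/eqP => eq_st; apply: ne; rewrite eq_st.
Qed.

End Encoding.

Lemma tbl_pow2 (T : Type) k (dflt : T) (g : 'I_k -> T) (t : 'I_k) :
  tbl dflt g (2 ^ t) = g t.
Proof.
rewrite /tbl; case: pickP => [s /eqP|/(_ t)]; last by rewrite eqxx.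
by move/eqP; rewrite eqn_exp2l // => /eqP eq_ts; congr g; apply: val_inj.
Qed.

Section GrayCode.
Variable k : nat.

Definition unit_row (f : nat) : 'rV['F_2]_k := tbl 0 (delta_mx 0) f.

Lemma unit_row_pow2 (t : 'I_k) : unit_row (2 ^ t) = delta_mx 0 t.
Proof. exact: tbl_pow2. Qed.

Fixpoint gray (m : nat) : 'rV['F_2]_k :=
  if m is m'.+1 then gray m' + unit_row (lowbit m) else 0.

Lemma gray_pow2D K j : (j < 2 ^ K)%N -> gray (2 ^ K + j) = gray (2 ^ K) + gray j.
Proof.
elim: j => [|j IH] lt_j; first by rewrite addn0 addr0.
by rewrite addnS /= IH ?(ltnW lt_j) // -addnS lowbit_pow2D // addrA.
Qed.

Lemma gray_support K j (s : 'I_k) : (j < 2 ^ K)%N -> (K <= s)%N -> gray j 0 s = 0.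
Proof.
move=> + le_Ks; elim: j => [|j IH] lt_j; first by rewrite mxE.
have [v lt_vK lowbit_j] := lowbit_lt (ltn0Sn j) lt_j.
have lt_vk : (v < k)%N by have := ltn_ord s; lia.
rewrite /= lowbit_j (unit_row_pow2 (Ordinal lt_vk)) !mxE IH ?(ltnW lt_j) //=.
by rewrite add0r; case: eqP => // eq_s; rewrite eq_s /= leqNgt lt_vK in le_Ks.
Qed.

Lemma gray_pow2_top (s : 'I_k) : gray (2 ^ s) 0 s = 1.
Proof.
rewrite -[in gray _](prednK (expn_gt0 2 s)) /= prednK ?expn_gt0 // lowbit_pow2.
by rewrite unit_row_pow2 !mxE (@gray_support s) ?ltn_predL ?expn_gt0 //= add0r !eqxx.
Qed.

Lemma gray_onto K (y : 'rV['F_2]_k) : (forall s : 'I_k, (K <= s)%N -> y 0 s = 0) ->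
  exists2 j, (j < 2 ^ K)%N & gray j = y.
Proof.
elim: K y => [|K IH] y y_supp.
  by exists 0%N => //; apply/rowP => s; rewrite y_supp ?mxE.
have pow2S j : (j < 2 ^ K)%N -> (j < 2 ^ K.+1)%N by rewrite expnS; lia.
have [lt_Kk|ge_Kk] := ltnP K k; last first.
  have [|j /pow2S lt_j <-] := IH y; last by exists j.
  by move=> s /(leq_trans ge_Kk); rewrite leqNgt ltn_ord.
pose T := Ordinal lt_Kk; pose g := gray (2 ^ K).
have [|j lt_j gray_j] := IH (y - y 0 T *: g).
  move=> s; rewrite leq_eqVlt => /orP[/eqP eq_Ks|lt_Ks].
    have -> : s = T by apply: val_inj.
    by rewrite !mxE [g _ _](gray_pow2_top T) mulr1 subrr.
  by rewrite !mxE /g (@gray_support K.+1) ?(y_supp s) ?mulr0 ?subr0 ?ltn_exp2l.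
have [yT0|yT1] := F2_01 (y 0 T).
  by exists j; [exact: pow2S | rewrite gray_j yT0 scale0r subr0].
exists (2 ^ K + j)%N; first by rewrite expnS; lia.
by rewrite gray_pow2D // gray_j yT1 scale1r addrC subrK.
Qed.

Lemma gray_surj (y : 'rV['F_2]_k) : exists2 j, (j < 2 ^ k)%N & gray j = y.
Proof. by apply: gray_onto => s; rewrite leqNgt ltn_ord. Qed.

End GrayCode.

Section QuadraticForm.
Variables (R : comPzRingType) (k : nat).
Implicit Types (J : 'M[R]_k) (u : 'rV[R]_k).

Definition qform J u : R := \sum_i \sum_j u 0 i * J i j * u 0 j.

Lemma sum_mul_eq (F : 'I_k -> R) t : \sum_s F s * (s == t)%:R = F t.
Proof.
by rewrite (bigD1 t) //= eqxx mulr1 big1 ?addr0 // => s /negbTE ->; rewrite mulr0.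
Qed.

Lemma add_delta_entry u c t s : (u + c *: delta_mx 0 t) 0 s = u 0 s + c * (s == t)%:R.
Proof. by rewrite !mxE eqxx. Qed.

Lemma dot_add_delta (a : 'I_k -> R) u c t :
  \sum_s a s * (u + c *: delta_mx 0 t) 0 s = \sum_s a s * u 0 s + a t * c.
Proof.
under eq_bigr do rewrite add_delta_entry mulrDr mulrA.
by rewrite big_split /= sum_mul_eq.
Qed.

Lemma qform_add_delta J u c t :
  qform J (u + c *: delta_mx 0 t) =
  qform J u + c * \sum_j (J t j + J j t) * u 0 j + c ^+ 2 * J t t.
Proof.
pose e s : R := (s == t)%:R.
have expand i j : (u + c *: delta_mx 0 t) 0 i * J i j * (u + c *: delta_mx 0 t) 0 j =
    u 0 i * J i j * u 0 j + (u 0 i * J i j * c) * e j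
    + (c * J i j * u 0 j + (c * J i j * c) * e j) * e i.
  by rewrite !add_delta_entry; ring.
rewrite /qform; under eq_bigr do under eq_bigr do rewrite expand.
under eq_bigr do rewrite !big_split /= -mulr_suml sum_mul_eq.
rewrite !big_split /= !sum_mul_eq.
have -> : c * \sum_j (J t j + J j t) * u 0 j =
    \sum_j u 0 j * J j t * c + \sum_j c * J t j * u 0 j.
  by rewrite mulr_sumr -big_split; apply: eq_bigr => j _ /=; ring.
rewrite big_split /= sum_mul_eq; ring.
Qed.

End QuadraticForm.

Definition lift4 (b : 'F_2) : 'Z_4 := (bitv b)%:R.

Lemma Z4_four : 4 = 0 :> 'Z_4.
Proof. exact: val_inj. Qed.

Lemma Z4_sign_sqr (x : 'Z_4) : (1 - 2 * x) ^+ 2 = 1.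
Proof.
by rewrite (_ : _ ^+ 2 = 1 + 4 * (x ^+ 2 - x)); [rewrite Z4_four mul0r addr0 | ring].
Qed.

Lemma Z4_sign_double (x : 'Z_4) : 2 * (1 - 2 * x) = 2.
Proof. by rewrite (_ : 2 * _ = 2 - 4 * x); [rewrite Z4_four mul0r subr0 | ring]. Qed.

Lemma Z4_opp_double (x : 'Z_4) : - (2 * x) = 2 * x.
Proof. by apply/esym/eqP; rewrite -addr_eq0 -mulrDl -natrD Z4_four mul0r. Qed.

Lemma lift4M a b : lift4 (a * b) = lift4 a * lift4 b.
Proof. by case: (F2_01 a) => ->; case: (F2_01 b) => ->; apply: val_inj. Qed.

Lemma lift4_add1 b : lift4 (b + 1) = 1 - lift4 b.
Proof. by case: (F2_01 b) => ->; apply: val_inj. Qed.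

Lemma double_lift4D a b : 2 * lift4 (a + b) = 2 * lift4 a + 2 * lift4 b.
Proof. by case: (F2_01 a) => ->; case: (F2_01 b) => ->; apply: val_inj. Qed.

Lemma double_lift4_sum k (F : 'I_k -> 'F_2) :
  2 * lift4 (\sum_i F i) = \sum_i 2 * lift4 (F i).
Proof.
elim/big_rec2: _ => [|i a b _ <-]; first by rewrite mulr0.
by rewrite double_lift4D.
Qed.

Section Phase.
Variables (k : nat) (d : 'rV['F_2]_k) (J : 'M['F_2]_k).
Implicit Types (y : 'rV['F_2]_k).

Definition phase y : 'Z_4 :=
  let u := map_mx lift4 y in
  \sum_t lift4 (d 0 t) * u 0 t + 2 * qform (map_mx lift4 J) u.

Lemma phaseE y : phase y =
  (\sum_(t < k) bitv (d ord0 t) * bitv (y ord0 t)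
   + 2 * \sum_(i < k) \sum_(j < k) bitv (y ord0 i) * bitv (J i j) * bitv (y ord0 j))%N%:R.
Proof.
rewrite /phase /qform natrD natrM !natr_sum.
congr (_ + _ * _); apply: eq_bigr => i _; rewrite ?natr_sum !mxE ?natrM //.
by apply: eq_bigr => j _; rewrite !mxE !natrM.
Qed.

Lemma phase0 : phase 0 = 0.
Proof.
rewrite /phase /qform big1 ?add0r => [|t _]; last by rewrite !mxE mulr0.
by rewrite big1 ?mulr0 // => i _; rewrite big1 // => j _; rewrite !mxE !mul0r.
Qed.

Lemma map_lift4_flip y t :
  map_mx lift4 (y + delta_mx 0 t) = map_mx lift4 y + (1 - 2 * lift4 (y 0 t)) *: delta_mx 0 t.
Proof.
apply/rowP => s; rewrite !add_delta_entry !mxE; case: (eqVneq s t) => [->|_].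
  by rewrite !mulr1 lift4_add1; ring.
by rewrite !mulr0 !addr0.
Qed.

Hypothesis J_upper : forall i j : 'I_k, (j < i)%N -> J i j = 0.

Lemma double_lift4_symB t j :
  2 * (lift4 (J t j) + lift4 (J j t)) = 2 * lift4 (symB J t j).
Proof.
rewrite mxE; case: ltngtP => [lt_tj|lt_jt|eq_tj].
- by rewrite (J_upper lt_tj) addr0.
- by rewrite (J_upper lt_jt) add0r.
- by rewrite (val_inj eq_tj) mulrDr -mulrDl -natrD Z4_four mul0r mulr0.
Qed.

Lemma phase_flip y t :
  let a := lift4 (d 0 t) + 2 * lift4 (J t t) in
  phase (y + delta_mx 0 t) =
  phase y + (if y 0 t == 0 then a else - a) + 2 * lift4 ((y *m (symB J)^T) 0 t).
Proof.
move=> a; set sgn := 1 - 2 * lift4 (y 0 t).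
have sign : lift4 (d 0 t) * sgn + 2 * lift4 (J t t) = if y 0 t == 0 then a else - a.
  rewrite /sgn /a; case: (F2_01 (y 0 t)) => -> /=; first by rewrite mulr0 subr0 mulr1.
  by rewrite (_ : lift4 1 = 1) // [RHS]opprD [in RHS]Z4_opp_double; ring.
have cross : 2 * (sgn * \sum_j (lift4 (J t j) + lift4 (J j t)) * lift4 (y 0 j)) =
             2 * lift4 ((y *m (symB J)^T) 0 t).
  rewrite mulrA Z4_sign_double mxE double_lift4_sum mulr_sumr.
  by apply: eq_bigr => j _; rewrite mulrA double_lift4_symB [_^T _ _]mxE lift4M; ring.
rewrite {1}/phase map_lift4_flip dot_add_delta qform_add_delta Z4_sign_sqr mul1r.
have lifted_sum : \sum_j ((map_mx lift4 J) t j + (map_mx lift4 J) j t) * (map_mx lift4 y) 0 j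
    = \sum_j (lift4 (J t j) + lift4 (J j t)) * lift4 (y 0 j).
  by apply: eq_bigr => j _; rewrite !mxE.
by rewrite [(map_mx _ J) t t]mxE lifted_sum -sign -cross /phase /sgn; ring.
Qed.
End Phase.

Lemma expr_i_mod4 (C : numClosedFieldType) N : 'i ^+ (N %% 4) = 'i ^+ N :> C.
Proof.
rewrite [in RHS](divn_eq N 4) exprD mulnC exprM.
by rewrite (_ : 4 = 2 * 2)%N // exprM sqrCi sqrrN !expr1n mul1r.
Qed.

Lemma val_Z4_nat N : val (N%:R : 'Z_4) = (N %% 4)%N.
Proof. exact: val_Zp_nat. Qed.

Section Procedure.
Variables (C : numClosedFieldType) (n k : nat) (h : 'rV['F_2]_n)
  (Vm : 'M['F_2]_(k, n)) (d : 'rV['F_2]_k) (J : 'M['F_2]_k) (gamma : C).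
Hypotheses (Vm_free : row_free Vm) (J_upper : forall i j : 'I_k, (j < i)%N -> J i j = 0).
Implicit Types (y : 'rV['F_2]_k) (s : state C) (psi : nat -> C).

Definition site y : nat := enc (h + y *m Vm).
Definition amplitude y : C := gamma * 'i ^+ val (phase d J y).

Lemma site_inj : injective site.
Proof. by move=> y y' /enc_inj/addrI/(row_free_inj Vm_free). Qed.

Lemma amplitudeE y : amplitude y =
  gamma * 'i ^+ (\sum_(t < k) bitv (d ord0 t) * bitv (y ord0 t))%N
        * (-1) ^+ (\sum_(i < k) \sum_(j < k)
                     bitv (y ord0 i) * bitv (J i j) * bitv (y ord0 j))%N.
Proof.
by rewrite /amplitude phaseE val_Z4_nat expr_i_mod4 exprD exprM sqrCi mulrA.
Qed.

Definition registers_at y s : Prop :=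
  [/\ st_y s = enc y, st_x s = site y, st_p s = enc (y *m (symB J)^T)
    & st_q s = phase d J y].

Definition amplitudes_on (P : pred 'rV['F_2]_k) psi : Prop :=
  (forall y, psi (site y) = if P y then amplitude y else 0)
  /\ (forall z, (forall y, z != site y) -> psi z = 0).

Lemma amplitudes_on_upd (P Q : pred 'rV['F_2]_k) psi y :
  amplitudes_on P psi -> Q =1 predU1 y P ->
  amplitudes_on Q (upd psi (site y) (amplitude y)).
Proof.
move=> [on_site off_site] eqQ; split=> [y'|z z_off]; rewrite /upd.
  rewrite (inj_eq site_inj) eqQ /=; case: eqVneq => [-> //|_].
  exact: on_site.
by rewrite (negbTE (z_off y)); apply: off_site.
Qed.

Lemma step_flip s y (t : 'I_k) m : registers_at y s -> lowbit m = (2 ^ t)%N ->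
  let s' := step Vm d J gamma s m in let y' := y + delta_mx 0 t in
  registers_at y' s' /\ st_psi s' = upd (st_psi s) (site y') (amplitude y').
Proof.
move=> [def_y def_x def_p def_q] lowbit_m s' y'.
have land_t (u : 'rV['F_2]_k) :
    (PeanoNat.Nat.land (enc u) (2 ^ t) == 0)%N = (u 0 t == 0).
  by apply: negb_inj; rewrite land_pow2_neq0 testbit_enc rbit_ord.
have new_y : st_y s' = enc y' by rewrite /s' /= lowbit_m def_y encD enc_delta.
have new_x : st_x s' = site y'.
  by rewrite /s' /= lowbit_m def_x /tabV tbl_pow2 -encD /site mulmxDl rowE addrA.
have new_p : st_p s' = enc (y' *m (symB J)^T).
  rewrite /s' /= lowbit_m def_p /tabC tbl_pow2 -encD mulmxDl -rowE.
  by congr (enc (_ + _)); apply/rowP => i; rewrite !mxE.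
have new_q : st_q s' = phase d J y'.
  rewrite /s' /= lowbit_m phase_flip // def_y def_p def_q !land_t /tabA tbl_pow2.
  by rewrite !natrM natrD natrM /lift4 !bitvE; case: (y 0 t == 0).
have -> : st_psi s' = upd (st_psi s) (st_x s') (gamma * 'i ^+ val (st_q s')) by [].
by rewrite new_x new_q.
Qed.

Definition visited m : pred 'rV['F_2]_k := fun y => y \in map (@gray k) (iota 0 m.+1).

Lemma visitedS m y : visited m.+1 y = (y == gray k m.+1) || visited m y.
Proof. by rewrite /visited -[m.+2]addn1 iotaD map_cat mem_cat mem_seq1 orbC. Qed.

Definition run m : state C := foldl (step Vm d J gamma) (init h gamma) (iota 1 m).

Lemma runS m : run m.+1 = step Vm d J gamma (run m) m.+1.
Proof. by rewrite /run -[m.+1]addn1 iotaD foldl_cat /= add1n addn1. Qed.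

Lemma run_invariant m : (m < 2 ^ k)%N ->
  registers_at (gray k m) (run m) /\ amplitudes_on (visited m) (st_psi (run m)).
Proof.
elim: m => [_|m IH lt_m].
  rewrite /run /=.
  have site0 : site 0 = enc h by rewrite /site mul0mx addr0.
  have amp0 : amplitude 0 = gamma by rewrite /amplitude phase0 expr0 mulr1.
  split; first by split; rewrite ?mul0mx ?enc0 ?phase0.
  rewrite -site0 -amp0; apply: (@amplitudes_on_upd pred0) => [|y]; first by split.
  by rewrite /visited inE /= orbF.
have [regs amps] := IH (ltnW lt_m).
have [t lt_tk lowbit_m] := lowbit_lt (ltn0Sn m) lt_m.
have [regs' psi'] := step_flip (t := Ordinal lt_tk) regs lowbit_m.
have gray_m : gray k m.+1 = gray k m + delta_mx 0 (Ordinal lt_tk).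
  by rewrite /= lowbit_m (unit_row_pow2 (Ordinal lt_tk)).
rewrite runS gray_m; split=> //; rewrite psi'.
by apply: amplitudes_on_upd amps _ => y; rewrite visitedS gray_m.
Qed.
End Procedure.

Theorem theorem1 (C : numClosedFieldType) (n k : nat) (h : 'rV['F_2]_n)
  (Vm : 'M['F_2]_(k, n)) (d : 'rV['F_2]_k) (J : 'M['F_2]_k) (gamma : C) :
  (k <= n)%N ->
  row_free Vm ->
  (forall i j : 'I_k, (j < i)%N -> J i j = 0) ->
  gamma != 0 ->
  let psi := procedure h Vm d J gamma in
  (forall y : 'rV['F_2]_k,
     psi (enc (h + \sum_(t < k) y ord0 t *: row t Vm)) =
     gamma * 'i ^+ (\sum_(t < k) bitv (d ord0 t) * bitv (y ord0 t))%N
           * (-1) ^+ (\sum_(i < k) \sum_(j < k)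
                        bitv (y ord0 i) * bitv (J i j) * bitv (y ord0 j))%N) /\
  (forall x : 'rV['F_2]_n,
     ~ (exists y : 'rV['F_2]_k, x = h + \sum_(t < k) y ord0 t *: row t Vm) ->
     psi (enc x) = 0).
Proof.
move=> _ Vm_free J_upper _ psi.
have lt_last : (2 ^ k - 1 < 2 ^ k)%N by rewrite ltn_subrL expn_gt0.
have [_ [on_site off_site]] := run_invariant h d gamma Vm_free J_upper lt_last.
have all_visited (y : 'rV['F_2]_k) : visited (2 ^ k - 1) y.
  have [j lt_j <-] := gray_surj y.
  by apply: map_f; rewrite mem_iota subn1 prednK ?expn_gt0 // add0n lt_j.
split=> [y | x not_site].
  by move: (on_site y); rewrite all_visited amplitudeE -mulmx_sum_row.
apply: off_site => y; apply/eqP => /enc_inj def_x; apply: not_site.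
by exists y; rewrite def_x mulmx_sum_row.
Qed.
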